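(* For $n\ge1$, \[\frac{2^n\,A_{n+1}(z)}{z}=\sum_{k=0}^{n}\binom nk B_k(z)\,B_{n-k}(z).\]
   Context: $A_n(z)=\sum_{\sigma\in\mathfrak S_n}z^{\mathrm{des}(\sigma)+1}$, where $\mathrm{des}(\sigma)=\#\{i\in[n-1]:\sigma_i>\sigma_{i+1}\}$. $\mathfrak B_k$ is the set of signed permutations $\pi=\pi_1\cdots\pi_k$ (words over $\{\pm1,\dots,\pm k\}$ with $|\pi_1|,\dots,|\pi_k|$ a permutation of $[k]$), compared as integers, with $\pi_0=0$; $\mathrm{des}_B(\pi)=\#\{i\in\{0,\dots,k-1\}:\pi_i>\pi_{i+1}\}$ and $B_k(z)=\sum_{\pi\in\mathfrak B_k}z^{\mathrm{des}_B(\pi)}$, with $B_0(z)=1$. *)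

From mathcomp Require Import all_boot all_order all_algebra all_fingroup.
Set Implicit Arguments. Unset Strict Implicit. Unset Printing Implicit Defensive.
Import GRing.Theory Num.Theory.
Local Open Scope ring_scope.

(* Permutations of [n] are represented by 'S_n (permutations of {0..n-1});
   position i (1-based) is the ordinal i-1, value sigma_i is (s (i-1)) + 1. *)

Definition des (n : nat) (s : 'S_n) : nat :=
  #|[set i : 'I_n | (i.+1 < n)%N &&
        [exists j : 'I_n, (val j == i.+1) && (s j < s i)%N]]|.

Definition eulerA (n : nat) : {poly int} :=
  \sum_(s : 'S_n) 'X ^+ (des s).+1.

(* Signed permutations of [k]: a pair (s, e) with s : 'S_k and sign vector e;
   the entry pi_i (1-based i) is  (-1)^(e (i-1)) * ((s (i-1)) + 1)  as an integer. *)
Definition sperm_val (k : nat) (s : 'S_k) (e : {ffun 'I_k -> bool}) (i : 'I_k) : int :=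
  (-1) ^+ (e i) * ((s i).+1)%:Z.

Definition sperm_at (k : nat) (s : 'S_k) (e : {ffun 'I_k -> bool}) (i : nat) : int :=
  match i with
  | 0 => 0
  | i'.+1 => if insub i' is Some j then sperm_val s e j else 0
  end.

Definition desB (k : nat) (s : 'S_k) (e : {ffun 'I_k -> bool}) : nat :=
  #|[set i : 'I_k | sperm_at s e (val i).+1 < sperm_at s e (val i)]|.

Definition eulerB (k : nat) : {poly int} :=
  \sum_(s : 'S_k) \sum_(e : {ffun 'I_k -> bool}) 'X ^+ (desB s e).

From mathcomp Require Import all_boot all_order all_algebra all_fingroup.
From mathcomp Require Import ring zify.
Import Order.TTheory GRing.Theory Num.Theory.
Local Open Scope ring_scope.

(* Removing the largest letter n+1 from a permutation of [n+1] (resp. the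
   letter of largest absolute value from a signed permutation) and summing over
   the n+1 insertion positions gives
     A_(n+1) = (n+1) z A_n + z(1-z) A_n',
     B_(k+1) = (1 + (2k+1) z) B_k + 2z(1-z) B_k':
   a letter larger (resp. smaller) than all others, pi_0 = 0 included, keeps
   the number of descents when inserted into a descent and adds one when
   inserted into an ascent; at the end it keeps it (resp. adds one).
   By Pascal's rule the binomial convolution C_n = sum_k C(n,k) B_k B_(n-k)
   then satisfies C_(n+1) = (2 + (2n+2) z) C_n + 2z(1-z) C_n', which is the
   recurrence satisfied by 2^n A_(n+1) / z; both sides agree at n = 0. *)

Fixpoint seq_des (x : int) (s : seq int) : nat :=
  if s is y :: s' then (y < x)%R + seq_des y s' else 0.

Definition ins_at (p : nat) (s : seq int) (v : int) := take p s ++ v :: drop p s.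

Arguments ins_at : simpl never.

Section DescentInsertion.

Variable R : comNzRingType.

Lemma sum_ins_at_des_max (v : int) s x : all (fun y => y < v) (x :: s) ->
  \sum_(p < (size s).+1) 'X^(seq_des x (ins_at p s v)) =
    ((seq_des x s).+1)%:R * 'X^(seq_des x s)
    + ((size s)%:R - (seq_des x s)%:R) * 'X^((seq_des x s).+1) :> {poly R}.
Proof.
elim: s x => [|y s IH] x /=.
  rewrite andbT => xv; rewrite big_ord1 /ins_at /= ltNge (ltW xv) /= expr0.
  by rewrite !mul1r subrr mul0r addr0.
case/and3P => xv yv alls.
rewrite big_ord_recl /= ltNge (ltW xv) yv /=.
under eq_bigr => i _ do rewrite add0n -[take i s ++ _]/(ins_at i s v) exprD.
rewrite -mulr_sumr IH /=; last by rewrite yv.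
by case: (y < x) => /=; rewrite ?add0n ?add1n !exprS ?expr0 -!natr1 ?natrD; ring.
Qed.

Lemma sum_ins_at_des_min (v : int) s x : all (fun y => v < y) (x :: s) ->
  \sum_(p < (size s).+1) 'X^(seq_des x (ins_at p s v)) =
    (seq_des x s)%:R * 'X^(seq_des x s)
    + (((size s).+1)%:R - (seq_des x s)%:R) * 'X^((seq_des x s).+1) :> {poly R}.
Proof.
elim: s x => [|y s IH] x /=.
  rewrite andbT => xv; rewrite big_ord1 /ins_at /= xv /= expr0 expr1.
  by rewrite !mul0r add0r subr0 mul1r.
case/and3P => xv yv alls.
rewrite big_ord_recl /= xv ltNge (ltW yv) /=.
under eq_bigr => i _ do rewrite add0n -[take i s ++ _]/(ins_at i s v) exprD.
rewrite -mulr_sumr IH /=; last by rewrite yv.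
by case: (y < x) => /=; rewrite ?add0n ?add1n !exprS ?expr0 -!natr1 ?natrD; ring.
Qed.

End DescentInsertion.

Section BinomialConvolution.

Variable R : comNzRingType.
Implicit Type u : nat -> {poly R}.

Definition binomial_convolution u n :=
  \sum_(k < n.+1) 'C(n, k)%:R * (u k * u (n - k)%N).

Lemma binomial_convolutionS u n :
  binomial_convolution u n.+1 =
  \sum_(k < n.+1) 'C(n, k)%:R * (u k.+1 * u (n - k)%N + u k * u (n.+1 - k)%N).
Proof.
rewrite /binomial_convolution big_ord_recl /= bin0.
under eq_bigr => i _ do rewrite /bump /= add1n binS natrD mulrDl subSS.
rewrite big_split /=.
under [in RHS]eq_bigr => i _ do rewrite mulrDr.
rewrite [in RHS]big_split /= addrA [RHS]addrC; congr (_ + _).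
rewrite [in RHS]big_ord_recl /= bin0 subn0.
rewrite [X in _ + X = _]big_ord_recr /= bin_small // mul0r addr0.
by congr (_ + _); apply: eq_bigr => i _; rewrite /bump /= add1n subSS.
Qed.

Variable u : nat -> {poly R}.
Hypothesis uS : forall k, u k.+1 =
  (1 + (2 * k + 1)%N%:R * 'X) * u k + 2%:R * 'X * (1 - 'X) * (u k)^`().

Lemma binomial_convolution_rec n :
  binomial_convolution u n.+1 =
  (2%:R + (2 * n + 2)%N%:R * 'X) * binomial_convolution u n
  + 2%:R * 'X * (1 - 'X) * (binomial_convolution u n)^`().
Proof.
rewrite binomial_convolutionS /binomial_convolution.
rewrite raddf_sum /= !mulr_sumr -big_split /=.
apply: eq_bigr => [[k /= le_kn]] _.
have d1 : (1 : {poly R})^`() = 0 by rewrite -polyC1 derivC.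
rewrite subSn // !uS derivM derivMn d1 mul0rn mul0r add0r derivM.
by rewrite !natrD natrB //; ring.
Qed.

Variable a : nat -> {poly R}.
Hypothesis a0 : a 0%N = 'X.
Hypothesis u0 : u 0%N = 1.
Hypothesis aS : forall n,
  a n.+1 = (n.+2)%:R * 'X * a n + 'X * (1 - 'X) * (a n)^`().

Lemma exp2_mul_eq_X_mul_binomial_convolution n :
  2%:R ^+ n * a n = 'X * binomial_convolution u n.
Proof.
elim: n => [|n IH].
  by rewrite expr0 mul1r a0 /binomial_convolution big_ord1 bin0 u0 !mul1r mulr1.
have D : 2%:R ^+ n * (a n)^`() =
    binomial_convolution u n + 'X * (binomial_convolution u n)^`().
  have := congr1 deriv IH.
  rewrite -natrX -mulr_natl !derivE /=.
  by rewrite mul0rn !(mul0r, mulr0, add0r, mulr1, mul1r) natrX.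
rewrite aS binomial_convolution_rec exprS.
have -> : 2%:R * 2%:R ^+ n * ((n.+2)%:R * 'X * a n + 'X * (1 - 'X) * (a n)^`())
   = 2%:R * (n.+2)%:R * 'X * (2%:R ^+ n * a n)
     + 2%:R * 'X * (1 - 'X) * (2%:R ^+ n * (a n)^`()) by ring.
have -> : (n.+2)%:R = n%:R + 2%:R :> {poly R} by rewrite -natrD addn2.
by rewrite IH D natrD natrM; ring.
Qed.

End BinomialConvolution.

Lemma sum_lift_perm_max (V : nmodType) n (F : 'S_n.+1 -> V) :
  \sum_(t : 'S_n.+1) F t =
  \sum_(i : 'I_n.+1) \sum_(s : 'S_n) F (lift_perm i ord_max s).
Proof.
rewrite (partition_big (fun t : 'S_n.+1 => t^-1%g ord_max) predT) //=.
apply: eq_bigr => i0 _.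
rewrite (eq_bigl (fun t : 'S_n.+1 => t i0 == ord_max)); last first.
  by move=> t; apply/eqP/eqP => [<-|<-]; rewrite ?permKV ?permK.
rewrite (reindex (lift_perm i0 ord_max)); last first.
  pose ulsf i (s : 'S_n.+1) k := odflt k (unlift (s i) (s (lift i k))).
  have ulsfK i (s : 'S_n.+1) k : lift (s i) (ulsf i s k) = s (lift i k).
    rewrite /ulsf; have:= neq_lift i k.
    by rewrite -(can_eq (permK s)) => /unlift_some[] ? ? ->.
  have inj_ulsf : injective (ulsf i0 _).
    move=> s; apply: can_inj (ulsf (s i0) s^-1%g) _ => k'.
    by rewrite {1}/ulsf ulsfK !permK liftK.
  exists (fun s => perm (inj_ulsf s)) => [s _ | s].
    by apply/permP=> k'; rewrite permE /ulsf lift_perm_lift lift_perm_id liftK.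
  move/(s _ =P _) => si0; apply/permP=> k.
  case: (unliftP i0 k) => [k'|] ->; rewrite ?lift_perm_id //.
  by rewrite lift_perm_lift -si0 permE ulsfK.
by apply: eq_bigl => s; rewrite lift_perm_id eqxx.
Qed.

Definition ffun_insert {T : Type} {n} (i : 'I_n.+1) (b : T) (e : {ffun 'I_n -> T}) :
    {ffun 'I_n.+1 -> T} :=
  [ffun j => if unlift i j is Some k then e k else b].

Lemma sum_ffun_insert {V : nmodType} {T : finType} {n} (i : 'I_n.+1)
    (G : {ffun 'I_n.+1 -> T} -> V) :
  \sum_(e' : {ffun 'I_n.+1 -> T}) G e' =
  \sum_(b : T) \sum_(e : {ffun 'I_n -> T}) G (ffun_insert i b e).
Proof.
rewrite pair_big /=.
rewrite (reindex (fun p : T * {ffun 'I_n -> T} => ffun_insert i p.1 p.2)) //.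
exists (fun e' : {ffun 'I_n.+1 -> T} => (e' i, [ffun k => e' (lift i k)])).
  move=> [b e] _ /=; congr (_, _); first by rewrite ffunE unlift_none.
  by apply/ffunP => k; rewrite !ffunE liftK.
move=> e' _; apply/ffunP => j; rewrite ffunE.
by case: (unliftP i j) => [k|] ->; rewrite ?ffunE.
Qed.

Lemma map_enum_lift (T : Type) n (i : 'I_n.+1) (g : 'I_n.+1 -> T) (h : 'I_n -> T) v :
  g i = v -> (forall k, g (lift i k) = h k) ->
  [seq g j | j <- enum 'I_n.+1] =
  take i [seq h k | k <- enum 'I_n] ++ v :: drop i [seq h k | k <- enum 'I_n].
Proof.
move=> gi gl; have le_in : (i <= n)%N by rewrite -ltnS.
apply: (@eq_from_nth _ v).
  rewrite size_cat /= size_take size_drop !size_map -!enumT !size_enum_ord.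
  by case: ifP; lia.
move=> j; rewrite size_map size_enum_ord => lt_jn.
rewrite (nth_map (Ordinal lt_jn)) ?size_enum_ord //.
rewrite (nth_ord_enum (Ordinal lt_jn) (Ordinal lt_jn)).
rewrite nth_cat size_take size_map size_enum_ord.
have -> : (if (i < n)%N then (i : nat) else n) = i by case: ifP; lia.
case: (ltngtP j i) => [lt_ji|lt_ij|eq_ji].
- have lt_jn' : (j < n)%N by lia.
  rewrite nth_take // (nth_map (Ordinal lt_jn')) ?size_enum_ord //.
  rewrite (nth_ord_enum (Ordinal lt_jn') (Ordinal lt_jn')) -gl.
  by congr g; apply: val_inj; rewrite /= /bump leqNgt lt_ji.
- have -> : (j - i = (j.-1 - i).+1)%N by lia.
  have lt_jn' : (j.-1 < n)%N by lia.
  rewrite /= nth_drop.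
  have -> : (i + (j.-1 - i) = j.-1)%N by lia.
  rewrite (nth_map (Ordinal lt_jn')) ?size_enum_ord //.
  rewrite (nth_ord_enum (Ordinal lt_jn') (Ordinal lt_jn')) -gl.
  by congr g; apply: val_inj; rewrite /= /bump; lia.
- rewrite -gi; have -> : (j - i = 0)%N by lia.
  by congr g; apply: val_inj; rewrite /= eq_ji.
Qed.

Lemma seq_des_nth x s :
  seq_des x s = (\sum_(i < size s) (nth 0 (x :: s) i.+1 < nth 0 (x :: s) i)%R)%N.
Proof.
elim: s x => [|y s IH] x; first by rewrite big_ord0.
by rewrite big_ord_recl /= IH.
Qed.

Lemma card_set_sum_nat k (P : pred 'I_k) : #|[set i | P i]| = (\sum_(i < k) P i)%N.
Proof. by rewrite -sum1_card big_mkcond /=; apply: eq_bigr => i _; rewrite inE. Qed.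

Definition perm_word {n} (s : 'S_n) : seq int := [seq ((s j).+1)%:Z | j <- enum 'I_n].

Definition sperm_word {k} (s : 'S_k) (e : {ffun 'I_k -> bool}) : seq int :=
  [seq sperm_val s e j | j <- enum 'I_k].

Lemma size_perm_word {n} (s : 'S_n) : size (perm_word s) = n.
Proof. by rewrite size_map size_enum_ord. Qed.

Lemma size_sperm_word {k} (s : 'S_k) e : size (sperm_word s e) = k.
Proof. by rewrite size_map size_enum_ord. Qed.

Lemma nth_perm_word {n} (s : 'S_n) (j : 'I_n) : nth 0 (perm_word s) j = ((s j).+1)%:Z.
Proof. by rewrite /perm_word (nth_map j) ?size_enum_ord // nth_ord_enum. Qed.

Lemma sperm_at_nth k s e j : @sperm_at k s e j = nth 0 (0 :: sperm_word s e) j.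
Proof.
case: j => [|j] //=; case: insubP => [jo lt_jk j_eq|ge_jk].
  by rewrite /sperm_word (nth_map jo) ?size_enum_ord // -j_eq nth_ord_enum.
by rewrite nth_default // size_sperm_word leqNgt.
Qed.

Lemma desB_seq_des k s e : @desB k s e = seq_des 0 (sperm_word s e).
Proof.
rewrite /desB card_set_sum_nat seq_des_nth size_sperm_word.
by apply: eq_bigr => i _; rewrite !sperm_at_nth.
Qed.

(* The extra comparison of [seq_des 0] with [0] is never a descent: all letters are positive. *)
Lemma des_seq_des n s : @des n s = seq_des 0 (perm_word s).
Proof.
rewrite /des card_set_sum_nat seq_des_nth size_perm_word.
case: n s => [|m] s; first by rewrite !big_ord0.
rewrite big_ord_recr big_ord_recl /= ltnn addn0 (nth_perm_word s ord0) add0n.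
apply: eq_bigr => i _.
have -> : (perm_word s)`_i = (s (widen_ord (leqnSn m) i)).+1 by rewrite -nth_perm_word.
have -> : (perm_word s)`_(bump 0 i) = (s (lift ord0 i)).+1 by rewrite -nth_perm_word.
rewrite ltz_nat ltnS ltn_ord /= ltnS; congr (nat_of_bool _).
apply/existsP/idP => [[j /andP[/eqP j_eq lt_j]]|lt_i].
  by have -> : lift ord0 i = j by apply: val_inj; rewrite /= j_eq /bump.
by exists (lift ord0 i); rewrite /= lt_i andbT /bump.
Qed.

Lemma perm_word_lift n (i : 'I_n.+1) (s : 'S_n) :
  perm_word (lift_perm i ord_max s) = ins_at i (perm_word s) (n.+1)%:Z.
Proof.
apply: map_enum_lift; first by rewrite lift_perm_id.
by move=> k; rewrite lift_perm_lift /= /bump leqNgt ltn_ord.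
Qed.

Lemma sperm_word_lift n (i : 'I_n.+1) (s : 'S_n) b e :
  sperm_word (lift_perm i ord_max s) (ffun_insert i b e) =
  ins_at i (sperm_word s e) ((-1) ^+ b * (n.+1)%:Z).
Proof.
apply: map_enum_lift; first by rewrite /sperm_val lift_perm_id ffunE unlift_none.
move=> k; rewrite /sperm_val lift_perm_lift ffunE liftK /=.
by rewrite /bump leqNgt ltn_ord.
Qed.

Lemma sum_lift_perm_des n (s : 'S_n) :
  \sum_(i < n.+1) 'X ^+ (des (lift_perm i ord_max s)).+1 =
  (n.+1)%:R * 'X * 'X ^+ (des s).+1 + 'X * (1 - 'X) * ('X ^+ (des s).+1)^`() :> {poly int}.
Proof.
under eq_bigr => i _ do rewrite des_seq_des perm_word_lift exprS.
have all_lt : all (fun y => y < (n.+1)%:Z) (0 :: perm_word s).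
  by apply/allP => _ /predU1P[-> // | /mapP[j _ ->]]; rewrite ltz_nat ltnS.
rewrite -mulr_sumr.
have := @sum_ins_at_des_max int _ _ _ all_lt; rewrite size_perm_word => ->.
rewrite des_seq_des derivXn /= -mulr_natl !exprS -natr1.
ring.
Qed.

Lemma sum_lift_sperm_desB k (s : 'S_k) (e : {ffun 'I_k -> bool}) :
  \sum_(b : bool) \sum_(i < k.+1)
     'X^(desB (lift_perm i ord_max s) (ffun_insert i b e)) =
  (1 + (2 * k + 1)%N%:R * 'X) * 'X^(desB s e)
  + 2%:R * 'X * (1 - 'X) * ('X^(desB s e))^`() :> {poly int}.
Proof.
have abs_sperm_val j : `|sperm_val s e j| = (s j).+1%:Z.
  by rewrite /sperm_val normrM normrX normrN1 expr1n mul1r.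
have lt_word y : y \in sperm_word s e -> - (k.+1)%:Z < y < (k.+1)%:Z.
  case/mapP=> j _ ->; rewrite -ltr_norml abs_sperm_val ltz_nat ltnS.
  exact: ltn_ord.
rewrite big_bool /=.
under eq_bigr => i _ do rewrite desB_seq_des sperm_word_lift expr1 mulN1r.
under [X in _ + X]eq_bigr => i _ do rewrite desB_seq_des sperm_word_lift expr0 mul1r.
have all_gt : all (fun y => - (k.+1)%:Z < y) (0 :: sperm_word s e).
  by apply/allP => y /predU1P[-> // | /lt_word/andP[]].
have all_lt : all (fun y => y < (k.+1)%:Z) (0 :: sperm_word s e).
  by apply/allP => y /predU1P[-> // | /lt_word/andP[]].
have := @sum_ins_at_des_min int _ _ _ all_gt; rewrite size_sperm_word => ->.
have := @sum_ins_at_des_max int _ _ _ all_lt; rewrite size_sperm_word => ->.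
rewrite desB_seq_des derivXn -mulr_natl.
case: (seq_des 0 (sperm_word s e)) => [|d] /=.
  by rewrite mul0r !expr0 expr1 -!natr1 !natrD; ring.
by rewrite !exprS -!natr1 !natrD; ring.
Qed.

Lemma eulerAS n :
  eulerA n.+1 = (n.+1)%:R * 'X * eulerA n + 'X * (1 - 'X) * (eulerA n)^`().
Proof.
rewrite /eulerA sum_lift_perm_max exchange_big /= raddf_sum !mulr_sumr -big_split /=.
by apply: eq_bigr => s _; apply: sum_lift_perm_des.
Qed.

Lemma eulerBS k : eulerB k.+1 =
  (1 + (2 * k + 1)%N%:R * 'X) * eulerB k + 2%:R * 'X * (1 - 'X) * (eulerB k)^`().
Proof.
rewrite /eulerB sum_lift_perm_max exchange_big /= raddf_sum !mulr_sumr -big_split /=.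
apply: eq_bigr => s _.
under eq_bigr => i _ do
  rewrite (sum_ffun_insert i (fun e' => 'X ^+ desB (lift_perm i ord_max s) e')).
rewrite exchange_big /=.
under eq_bigr => b _ do rewrite exchange_big /=.
rewrite exchange_big /= raddf_sum !mulr_sumr -big_split /=.
by apply: eq_bigr => e _; apply: sum_lift_sperm_desB.
Qed.

Lemma eulerA0 : eulerA 0 = 'X.
Proof.
rewrite /eulerA (eq_bigr (fun _ => 'X)) ?sumr_const ?card_Sn // => s _.
by rewrite des_seq_des (size0nil (size_perm_word s)) expr1.
Qed.

Lemma eulerB0 : eulerB 0 = 1.
Proof.
rewrite /eulerB (eq_bigr (fun _ => 1)) ?sumr_const ?card_Sn // => s _.
rewrite (eq_bigr (fun _ => 1)) ?sumr_const ?card_ffun ?card_ord ?card_bool // => e _.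
by rewrite desB_seq_des (size0nil (size_sperm_word s e)) expr0.
Qed.

(* The identity also holds for [n = 0]. *)
Theorem mainTheorem17 (n : nat) (hn : (1 <= n)%N) :
  2 ^+ n * eulerA n.+1 =
  'X * \sum_(0 <= k < n.+1) ('C(n, k))%:R * (eulerB k * eulerB (n - k)).
Proof.
rewrite big_mkord.
apply: (@exp2_mul_eq_X_mul_binomial_convolution _ _ eulerBS (fun m => eulerA m.+1)).
- by rewrite eulerAS eulerA0 derivX; ring.
- exact: eulerB0.
- by move=> m; rewrite eulerAS.
Qed.
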